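(* Let $\mathbb{C}$ be a pointed finitely complete Mal'tsev category and let $u:S\to X$ be a morphism in $\mathbb{C}$. The following are equivalent: (a) $u$ is a characteristic monomorphism; (b) for each protosplit monomorphism $\kappa:X\to A$ the composite $\kappa u$ is a Bourn-normal monomorphism; (c) for each reflexive relation $(R,r_1,r_2)$ on an object $Y$ together with a kernel $k:X\to R$ of $r_1$, there exist a reflexive relation $(T,t_1,t_2)$ on $Y$, a monomorphism $v:T\to R$ with $r_1v=t_1$ and $r_2v=t_2$ (a monomorphism of reflexive relations), and a kernel $l:S\to T$ of $t_1$, such that $vl=ku$; (d) the same as (c) with ''reflexive relation'' replaced by ''equivalence relation'' throughout.
   Context: A category is Mal'tsev if it is finitely complete and every internal reflexive relation is an internal equivalence relation. A relation $(R,r_1,r_2)$ on $Y$ is a pair $r_1,r_2:R\to Y$ with $\langle r_1,r_2\rangle$ a monomorphism; it is reflexive if there is $s:Y\to R$ with $r_1s=r_2s=1_Y$. A protosplit monomorphism is a kernel of a split epimorphism. A monomorphism $m:S\to Y$ is Bourn-normal if there is an equivalence relation $(R,r_1,r_2)$ on $Y$ and $\tilde m:S\times S\to R$ with $r_1\tilde m=m\pi_1$, $r_2\tilde m=m\pi_2$ and the square $r_1\tilde m=m\pi_1$ a pullback. A morphism $u:S\to X$ is a characteristic monomorphism if for every Bourn-normal monomorphism $n:X\to Y$ the composite $nu$ is a Bourn-normal monomorphism. *)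

Set Implicit Arguments.
Set Universe Polymorphism.

Record Category := {
  Ob :> Type;
  Hom : Ob -> Ob -> Type;
  comp : forall {A B D : Ob}, Hom B D -> Hom A B -> Hom A D;
  id : forall (A : Ob), Hom A A;
  comp_assoc : forall (A B D E : Ob) (h : Hom D E) (g : Hom B D) (f : Hom A B),
      comp h (comp g f) = comp (comp h g) f;
  id_left : forall (A B : Ob) (f : Hom A B), comp (id B) f = f;
  id_right : forall (A B : Ob) (f : Hom A B), comp f (id A) = f
}.

Arguments Hom {c} _ _.
Arguments comp {c A B D} _ _.
Arguments id {c} _.

Notation "g ∘ f" := (comp g f) (at level 40, left associativity).

Section Basics.
Context {C : Category}.

Definition is_mono {A B : C} (m : Hom A B) : Prop :=
  forall (Z : C) (f g : Hom Z A), m ∘ f = m ∘ g -> f = g.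

Definition is_terminal (T : C) : Prop :=
  forall A : C, exists f : Hom A T, forall g : Hom A T, g = f.

Definition is_initial (I : C) : Prop :=
  forall A : C, exists f : Hom I A, forall g : Hom I A, g = f.

Definition is_product {A B P : C} (p1 : Hom P A) (p2 : Hom P B) : Prop :=
  forall (Z : C) (f : Hom Z A) (g : Hom Z B),
    exists h : Hom Z P, (p1 ∘ h = f /\ p2 ∘ h = g) /\
      forall h' : Hom Z P, p1 ∘ h' = f -> p2 ∘ h' = g -> h' = h.

Definition is_equalizer {A B E : C} (f g : Hom A B) (e : Hom E A) : Prop :=
  f ∘ e = g ∘ e /\
  forall (Z : C) (x : Hom Z A), f ∘ x = g ∘ x ->
    exists h : Hom Z E, e ∘ h = x /\ forall h' : Hom Z E, e ∘ h' = x -> h' = h.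

Definition is_pullback {A B D P : C} (f : Hom A D) (g : Hom B D)
    (p1 : Hom P A) (p2 : Hom P B) : Prop :=
  f ∘ p1 = g ∘ p2 /\
  forall (Z : C) (x : Hom Z A) (y : Hom Z B), f ∘ x = g ∘ y ->
    exists h : Hom Z P, (p1 ∘ h = x /\ p2 ∘ h = y) /\
      forall h' : Hom Z P, p1 ∘ h' = x -> p2 ∘ h' = y -> h' = h.

End Basics.

Definition finitely_complete (C : Category) : Prop :=
  (exists T : C, is_terminal T) /\
  (forall A B : C, exists (P : C) (p1 : Hom P A) (p2 : Hom P B), is_product p1 p2) /\
  (forall (A B : C) (f g : Hom A B), exists (E : C) (e : Hom E A), is_equalizer f g e) /\
  (forall (A B D : C) (f : Hom A D) (g : Hom B D),
     exists (P : C) (p1 : Hom P A) (p2 : Hom P B), is_pullback f g p1 p2).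

Section Relations.
Context {C : Category}.

Definition is_zero_object (Z : C) : Prop := is_initial Z /\ is_terminal Z.

Definition is_zero_mor {A B : C} (f : Hom A B) : Prop :=
  exists (Z : C) (a : Hom A Z) (b : Hom Z B), is_zero_object Z /\ f = b ∘ a.

Definition is_kernel {A B K : C} (f : Hom A B) (k : Hom K A) : Prop :=
  is_zero_mor (f ∘ k) /\
  forall (Z : C) (x : Hom Z A), is_zero_mor (f ∘ x) ->
    exists h : Hom Z K, k ∘ h = x /\ forall h' : Hom Z K, k ∘ h' = x -> h' = h.

Definition is_split_epi {A B : C} (p : Hom A B) : Prop :=
  exists s : Hom B A, p ∘ s = id B.

Definition is_protosplit_mono {K A : C} (k : Hom K A) : Prop :=
  exists (B : C) (p : Hom A B), is_split_epi p /\ is_kernel p k.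

(* (R, r1, r2) is a relation on Y: <r1,r2> is a monomorphism, i.e.
   (r1, r2) is jointly monic *)
Definition is_relation {Y R : C} (r1 r2 : Hom R Y) : Prop :=
  forall (Z : C) (f g : Hom Z R), r1 ∘ f = r1 ∘ g -> r2 ∘ f = r2 ∘ g -> f = g.

Definition is_reflexive_relation {Y R : C} (r1 r2 : Hom R Y) : Prop :=
  is_relation r1 r2 /\ exists s : Hom Y R, r1 ∘ s = id Y /\ r2 ∘ s = id Y.

Definition is_symmetric_relation {Y R : C} (r1 r2 : Hom R Y) : Prop :=
  is_relation r1 r2 /\ exists sg : Hom R R, r1 ∘ sg = r2 /\ r2 ∘ sg = r1.

Definition is_transitive_relation {Y R : C} (r1 r2 : Hom R Y) : Prop :=
  is_relation r1 r2 /\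
  forall (P : C) (p1 p2 : Hom P R), is_pullback r2 r1 p1 p2 ->
    exists tau : Hom P R, r1 ∘ tau = r1 ∘ p1 /\ r2 ∘ tau = r2 ∘ p2.

Definition is_equivalence_relation {Y R : C} (r1 r2 : Hom R Y) : Prop :=
  is_reflexive_relation r1 r2 /\ is_symmetric_relation r1 r2 /\
  is_transitive_relation r1 r2.

Definition is_bourn_normal {S Y : C} (m : Hom S Y) : Prop :=
  is_mono m /\
  exists (R : C) (r1 r2 : Hom R Y) (SS : C) (pi1 pi2 : Hom SS S) (mt : Hom SS R),
    is_equivalence_relation r1 r2 /\ is_product pi1 pi2 /\
    r1 ∘ mt = m ∘ pi1 /\ r2 ∘ mt = m ∘ pi2 /\
    is_pullback r1 m mt pi1.

Definition is_characteristic_mono {S X : C} (u : Hom S X) : Prop :=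
  forall (Y : C) (n : Hom X Y), is_bourn_normal n -> is_bourn_normal (n ∘ u).

End Relations.

Definition pointed (C : Category) : Prop := exists Z : C, is_zero_object Z.

Definition malcev (C : Category) : Prop :=
  finitely_complete C /\
  forall (Y R : C) (r1 r2 : Hom R Y),
    is_reflexive_relation r1 r2 -> is_equivalence_relation r1 r2.


(* A Bourn-normal monomorphism is the zero class of an equivalence relation: [n] is
   Bourn-normal iff [n = t2 l] for an equivalence relation [(T, t1, t2)] and a kernel
   [l] of [t1].  Every kernel is thus Bourn-normal, being the zero class of its kernel
   pair.  Hence (a) => (b), protosplit monomorphisms being kernels, and (d) => (a),
   since (d) applied to such a presentation of [n] presents [n u] in the same way.
   For (b) => (c), let [(R, r1, r2)] be reflexive with splitting [s] and [k] a kernel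
   of [r1]: [k] is protosplit, so [k u] is the zero class of an equivalence relation
   [E] on [R], and the pairs [(x, y)] of [E] with [x = s r1 y] form, via [y], a
   reflexive subrelation of [R] whose zero class is [k u].  In a Mal'tsev category
   reflexive relations are equivalences, whence (c) <=> (d). *)

Definition has_products (C : Category) : Prop :=
  forall A B : C, exists (P : C) (p1 : Hom P A) (p2 : Hom P B), is_product p1 p2.

Definition has_equalizers (C : Category) : Prop :=
  forall (A B : C) (f g : Hom A B), exists (E : C) (e : Hom E A), is_equalizer f g e.

Definition has_pullbacks (C : Category) : Prop :=
  forall (A B D : C) (f : Hom A D) (g : Hom B D),
    exists (P : C) (p1 : Hom P A) (p2 : Hom P B), is_pullback f g p1 p2.

Section Basics.
Context {C : Category}.

Lemma zero_mor_unique {A B : C} (f g : Hom A B) :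
  is_zero_mor f -> is_zero_mor g -> f = g.
Proof.
  intros [Z [a [b [[HZi _] ->]]]] [Z' [a' [b' [[_ HZt'] ->]]]].
  destruct (HZi Z') as [i _].
  transitivity ((b' ∘ i) ∘ a).
  - f_equal. destruct (HZi B) as [j Hj]. now rewrite (Hj b), (Hj (b' ∘ i)).
  - rewrite <- comp_assoc. f_equal. destruct (HZt' A) as [t Ht].
    now rewrite (Ht a'), (Ht (i ∘ a)).
Qed.

Lemma zero_mor_postcomp {A B D : C} (g : Hom B D) (f : Hom A B) :
  is_zero_mor f -> is_zero_mor (g ∘ f).
Proof.
  intros [Z [a [b [HZ ->]]]]. exists Z, a, (g ∘ b). split; [exact HZ | apply comp_assoc].
Qed.

Lemma zero_mor_precomp {A B D : C} (f : Hom B D) (g : Hom A B) :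
  is_zero_mor f -> is_zero_mor (f ∘ g).
Proof.
  intros [Z [a [b [HZ ->]]]]. exists Z, (a ∘ g), b.
  split; [exact HZ | symmetry; apply comp_assoc].
Qed.

Lemma zero_mor_exists (Hpt : pointed C) (A B : C) : exists f : Hom A B, is_zero_mor f.
Proof.
  destruct Hpt as [Z [HZi HZt]].
  destruct (HZt A) as [a _], (HZi B) as [b _].
  exists (b ∘ a), Z, a, b. split; [split; assumption | reflexivity].
Qed.

Lemma kernel_mono {A B K : C} {f : Hom A B} {k : Hom K A} : is_kernel f k -> is_mono k.
Proof.
  intros [Hk0 Hku] Z a b E.
  destruct (Hku Z (k ∘ a)) as [h [_ Hh]].
  - rewrite comp_assoc. now apply zero_mor_precomp.
  - now rewrite (Hh a eq_refl), (Hh b (eq_sym E)).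
Qed.

Lemma equalizer_mono {A B E : C} {f g : Hom A B} {e : Hom E A} :
  is_equalizer f g e -> is_mono e.
Proof.
  intros [He Heu] Z a b E0.
  destruct (Heu Z (e ∘ a)) as [h [_ Hh]].
  - now rewrite !comp_assoc, He.
  - now rewrite (Hh a eq_refl), (Hh b (eq_sym E0)).
Qed.

Lemma product_jointly_monic {A B P : C} {p1 : Hom P A} {p2 : Hom P B} :
  is_product p1 p2 ->
  forall (Z : C) (f g : Hom Z P), p1 ∘ f = p1 ∘ g -> p2 ∘ f = p2 ∘ g -> f = g.
Proof.
  intros Hp Z f g E1 E2. destruct (Hp Z (p1 ∘ f) (p2 ∘ f)) as [h [_ Hh]].
  now rewrite (Hh f eq_refl eq_refl), (Hh g (eq_sym E1) (eq_sym E2)).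
Qed.

Lemma kernel_pair_relation {A B P : C} {p : Hom A B} {q1 q2 : Hom P A} :
  is_pullback p p q1 q2 -> is_relation q1 q2.
Proof.
  intros [HP HPu] Z a b E1 E2. destruct (HPu Z (q1 ∘ a) (q2 ∘ a)) as [h [_ Hh]].
  - now rewrite !comp_assoc, HP.
  - now rewrite (Hh a eq_refl eq_refl), (Hh b (eq_sym E1) (eq_sym E2)).
Qed.

Lemma kernel_pair_equivalence {A B P : C} {p : Hom A B} {q1 q2 : Hom P A} :
  is_pullback p p q1 q2 -> is_equivalence_relation q1 q2.
Proof.
  intros Hpb. pose proof (kernel_pair_relation Hpb) as Hrel. destruct Hpb as [HP HPu].
  split; [|split]; (split; [exact Hrel|]).
  - destruct (HPu A (id A) (id A)) as [d [Hd _]]; [reflexivity|]. now exists d.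
  - destruct (HPu P q2 q1 (eq_sym HP)) as [sg [Hsg _]]. now exists sg.
  - intros P' p1 p2 [H12 _].
    destruct (HPu P' (q1 ∘ p1) (q2 ∘ p2)) as [tau [Htau _]].
    + now rewrite !comp_assoc, HP, <- !comp_assoc, H12, !comp_assoc, HP.
    + now exists tau.
Qed.

End Basics.

Section EquivalenceKernel.
Context {C : Category}.
Hypotheses (Hpb : has_pullbacks C) (Hprod : has_products C).

Lemma transitive_compose {Y T Z : C} {t1 t2 : Hom T Y} (a b : Hom Z T) :
  is_transitive_relation t1 t2 -> t2 ∘ a = t1 ∘ b ->
  exists c : Hom Z T, t1 ∘ c = t1 ∘ a /\ t2 ∘ c = t2 ∘ b.
Proof.
  intros [_ Htr] Hab.
  destruct (Hpb _ _ _ t2 t1) as [P [p1 [p2 HP]]].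
  destruct (Htr P p1 p2 HP) as [tau [Ht1 Ht2]].
  destruct (proj2 HP Z a b Hab) as [q [[Hq1 Hq2] _]].
  exists (tau ∘ q).
  now rewrite !comp_assoc, Ht1, Ht2, <- !comp_assoc, Hq1, Hq2.
Qed.

Context {Y T S : C} {t1 t2 : Hom T Y} {l : Hom S T}.
Hypotheses (HT : is_equivalence_relation t1 t2) (Hl : is_kernel t1 l).

Lemma equivalence_kernel_mono : is_mono (t2 ∘ l).
Proof.
  intros Z f g E. apply (kernel_mono Hl). apply (proj1 (proj1 HT)).
  - rewrite !comp_assoc. apply zero_mor_unique; apply zero_mor_precomp, (proj1 Hl).
  - now rewrite !comp_assoc.
Qed.

(* [t2 l] is the class of [0], so any two of its elements are related. *)
Lemma equivalence_kernel_connect {Z : C} (a b : Hom Z S) :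
  exists c : Hom Z T, t1 ∘ c = t2 ∘ l ∘ a /\ t2 ∘ c = t2 ∘ l ∘ b.
Proof.
  destruct HT as [_ [[_ [sg [Hsg1 Hsg2]]] Htr]].
  destruct (transitive_compose (sg ∘ (l ∘ a)) (l ∘ b) Htr) as [c [Hc1 Hc2]].
  - rewrite !comp_assoc, Hsg2.
    apply zero_mor_unique; apply zero_mor_precomp, (proj1 Hl).
  - exists c. now rewrite Hc1, Hc2, !comp_assoc, Hsg1.
Qed.

Lemma equivalence_kernel_class {Z : C} (x : Hom Z T) (y : Hom Z S) :
  t1 ∘ x = t2 ∘ l ∘ y -> exists y' : Hom Z S, t2 ∘ x = t2 ∘ l ∘ y'.
Proof.
  intros Hxy.
  destruct (transitive_compose (l ∘ y) x (proj2 (proj2 HT))) as [c [Hc1 Hc2]].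
  { now rewrite comp_assoc, Hxy. }
  destruct (proj2 Hl Z c) as [y' [Hy' _]].
  { rewrite Hc1, comp_assoc. apply zero_mor_precomp, (proj1 Hl). }
  exists y'. now rewrite <- Hc2, <- Hy', comp_assoc.
Qed.

Lemma equivalence_kernel_bourn_normal : is_bourn_normal (t2 ∘ l).
Proof.
  split; [exact equivalence_kernel_mono|].
  destruct (Hprod S S) as [SS [pi1 [pi2 Hp]]].
  destruct (equivalence_kernel_connect pi1 pi2) as [mt [Hmt1 Hmt2]].
  exists T, t1, t2, SS, pi1, pi2, mt.
  do 4 (split; [assumption|]). split; [exact Hmt1|].
  intros Z x y Hxy.
  destruct (equivalence_kernel_class x y Hxy) as [y' Hy'].
  destruct (Hp Z y y') as [h [[Hh1 Hh2] Hhu]].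
  exists h. split; [split; [|exact Hh1]|].
  - apply (proj1 (proj1 HT)).
    + now rewrite comp_assoc, Hmt1, <- comp_assoc, Hh1.
    + now rewrite comp_assoc, Hmt2, <- comp_assoc, Hh2.
  - intros h' E1 E2. apply Hhu; [exact E2|].
    apply equivalence_kernel_mono.
    now rewrite comp_assoc, <- Hmt2, <- comp_assoc, E1.
Qed.

End EquivalenceKernel.

Section Normality.
Context {C : Category}.
Hypothesis Hpt : pointed C.

Lemma kernel_pair_kernel {A B K P : C} {p : Hom A B} {k : Hom K A}
    {q1 q2 : Hom P A} {l : Hom K P} :
  is_pullback p p q1 q2 -> is_kernel p k ->
  is_zero_mor (q1 ∘ l) -> q2 ∘ l = k -> is_kernel q1 l.
Proof.
  intros Hpb [_ Hku] Hl1 Hl2. split; [exact Hl1|].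
  intros Z x Hx. destruct (Hku Z (q2 ∘ x)) as [h [Hh Hhu]].
  { rewrite comp_assoc, <- (proj1 Hpb), <- comp_assoc. now apply zero_mor_postcomp. }
  exists h. split.
  - apply (kernel_pair_relation Hpb).
    + rewrite comp_assoc. apply zero_mor_unique; [now apply zero_mor_precomp | exact Hx].
    + now rewrite comp_assoc, Hl2.
  - intros h' E. apply Hhu. now rewrite <- E, comp_assoc, Hl2.
Qed.

Lemma kernel_bourn_normal (Hpb : has_pullbacks C) (Hprod : has_products C)
    {A B K : C} {p : Hom A B} {k : Hom K A} :
  is_kernel p k -> is_bourn_normal k.
Proof.
  intros Hk.
  destruct (Hpb _ _ _ p p) as [P [q1 [q2 HP]]].
  destruct (zero_mor_exists Hpt K A) as [z Hz].
  destruct (proj2 HP K z k) as [l [[Hl1 Hl2] _]].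
  { apply zero_mor_unique; [now apply zero_mor_postcomp | exact (proj1 Hk)]. }
  rewrite <- Hl2.
  apply (equivalence_kernel_bourn_normal Hpb Hprod (kernel_pair_equivalence HP)).
  apply (kernel_pair_kernel HP Hk); [now rewrite Hl1 | exact Hl2].
Qed.

(* The kernel of [r1] is [mt ∘ ⟨0, 1⟩]. *)
Lemma bourn_normal_equivalence_kernel {X Y : C} {n : Hom X Y} :
  is_bourn_normal n -> exists (R : C) (r1 r2 : Hom R Y) (k : Hom X R),
    is_equivalence_relation r1 r2 /\ is_kernel r1 k /\ r2 ∘ k = n.
Proof.
  intros [Hn [R [r1 [r2 [SS [pi1 [pi2 [mt [HE [Hp [Hm1 [Hm2 [_ Hpbu]]]]]]]]]]]]].
  destruct (zero_mor_exists Hpt X X) as [z Hz].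
  destruct (Hp X z (id X)) as [h0 [[H01 H02] _]].
  assert (Hk2 : r2 ∘ (mt ∘ h0) = n).
  { now rewrite comp_assoc, Hm2, <- comp_assoc, H02, id_right. }
  exists R, r1, r2, (mt ∘ h0). split; [exact HE|]. split; [|exact Hk2]. split.
  - rewrite comp_assoc, Hm1, <- comp_assoc, H01. now apply zero_mor_postcomp.
  - intros Z x Hx. destruct (zero_mor_exists Hpt Z X) as [y Hy].
    destruct (Hpbu Z x y) as [h [[Hh1 Hh2] _]].
    { apply zero_mor_unique; [exact Hx | now apply zero_mor_postcomp]. }
    assert (Hh : h0 ∘ (pi2 ∘ h) = h).
    { apply (product_jointly_monic Hp); rewrite comp_assoc.
      - rewrite H01, Hh2. apply zero_mor_unique; [now apply zero_mor_precomp | exact Hy].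
      - now rewrite H02, id_left. }
    exists (pi2 ∘ h). split.
    + now rewrite <- comp_assoc, Hh.
    + intros h' E. apply Hn.
      now rewrite <- Hk2, <- !comp_assoc, Hh, Hh1, <- E, <- !comp_assoc.
Qed.

End Normality.

Section Restriction.
Context {C : Category}.

Lemma kernel_restrict {S T E B B' : C} {w : Hom T E} {f : Hom E B} (a : Hom B' B)
    {g : Hom T B'} {j : Hom S E} {l : Hom S T} :
  is_mono w -> is_kernel f j -> f ∘ w = a ∘ g ->
  is_zero_mor (g ∘ l) -> w ∘ l = j -> is_kernel g l.
Proof.
  intros Hw [_ Hju] Hfw Hgl Hwl. split; [exact Hgl|].
  intros Z x Hx. destruct (Hju Z (w ∘ x)) as [y [Hy Hyu]].
  { rewrite comp_assoc, Hfw, <- comp_assoc. now apply zero_mor_postcomp. }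
  exists y. split.
  - apply Hw. now rewrite comp_assoc, Hwl.
  - intros y' Ey. apply Hyu. now rewrite <- Ey, comp_assoc, Hwl.
Qed.

Lemma relation_restrict_mono {R E T : C} {e1 e2 : Hom E R} (phi : Hom R R) {w : Hom T E} :
  is_relation e1 e2 -> is_mono w -> e1 ∘ w = phi ∘ (e2 ∘ w) -> is_mono (e2 ∘ w).
Proof.
  intros Hrel Hw Hwe Z f g Efg. apply Hw, Hrel.
  - now rewrite !comp_assoc, Hwe, <- !(comp_assoc _ _ _ _ _ phi), Efg.
  - now rewrite !comp_assoc.
Qed.

Lemma reflexive_restrict {Y R T : C} {r1 r2 : Hom R Y} {s : Hom Y R} {v : Hom T R}
    (sT : Hom Y T) :
  is_relation r1 r2 -> r1 ∘ s = id Y -> r2 ∘ s = id Y -> is_mono v -> v ∘ sT = s ->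
  is_reflexive_relation (r1 ∘ v) (r2 ∘ v).
Proof.
  intros Hrel Hs1 Hs2 Hv HsT. split.
  - intros Z f g E1 E2. apply Hv, Hrel; now rewrite !comp_assoc.
  - exists sT. now rewrite <- !comp_assoc, HsT.
Qed.

Hypothesis Hpt : pointed C.

Lemma kernel_restriction_of_bourn_normal (Heq : has_equalizers C)
    {Y R S X : C} {r1 r2 : Hom R Y} {k : Hom X R} (u : Hom S X) :
  is_reflexive_relation r1 r2 -> is_kernel r1 k -> is_bourn_normal (k ∘ u) ->
  exists (T : C) (t1 t2 : Hom T Y) (v : Hom T R) (l : Hom S T),
    is_reflexive_relation t1 t2 /\ is_mono v /\
    r1 ∘ v = t1 /\ r2 ∘ v = t2 /\ is_kernel t1 l /\ v ∘ l = k ∘ u.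
Proof.
  intros [Hrel [s [Hs1 Hs2]]] Hk Hku.
  destruct (bourn_normal_equivalence_kernel Hpt Hku)
    as [E [e1 [e2 [j [[[Herel [sE [HsE1 HsE2]]] _] [Hj Hej]]]]]].
  destruct (Heq E R e1 (s ∘ (r1 ∘ e2))) as [T [w Hweq]].
  pose proof (equalizer_mono Hweq) as Hwm. destruct Hweq as [Hw Hwu].
  assert (Hw' : e1 ∘ w = s ∘ (r1 ∘ (e2 ∘ w))) by now rewrite Hw, <- !comp_assoc.
  assert (Hvm : is_mono (e2 ∘ w)).
  { apply (relation_restrict_mono (s ∘ r1) Herel Hwm). now rewrite Hw', comp_assoc. }
  assert (Hku0 : is_zero_mor (r1 ∘ (k ∘ u))).
  { rewrite comp_assoc. apply zero_mor_precomp, (proj1 Hk). }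
  destruct (Hwu Y (sE ∘ s)) as [sT [HsT _]].
  { now rewrite comp_assoc, HsE1, id_left, <- !comp_assoc,
      (comp_assoc _ _ _ _ _ e2 sE s), HsE2, id_left, Hs1, id_right. }
  destruct (Hwu S j) as [l [Hl _]].
  { apply zero_mor_unique.
    - exact (proj1 Hj).
    - rewrite <- !comp_assoc, Hej. apply zero_mor_postcomp, Hku0. }
  exists T, (r1 ∘ (e2 ∘ w)), (r2 ∘ (e2 ∘ w)), (e2 ∘ w), l.
  refine (conj _ (conj Hvm (conj eq_refl (conj eq_refl (conj _ _))))).
  - apply (reflexive_restrict sT Hrel Hs1 Hs2 Hvm).
    now rewrite <- comp_assoc, HsT, comp_assoc, HsE2, id_left.
  - apply (kernel_restrict s Hwm Hj Hw'); [|exact Hl].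
    rewrite <- !comp_assoc, Hl, Hej. exact Hku0.
  - now rewrite <- comp_assoc, Hl.
Qed.

End Restriction.

Section KernelRestriction.
Context {C : Category}.

Definition kernel_restrictable (P : forall Y R : C, Hom R Y -> Hom R Y -> Prop)
    {S X : C} (u : Hom S X) : Prop :=
  forall (Y R : C) (r1 r2 : Hom R Y) (k : Hom X R),
    P Y R r1 r2 -> is_kernel r1 k ->
    exists (T : C) (t1 t2 : Hom T Y) (v : Hom T R) (l : Hom S T),
      P Y T t1 t2 /\ is_mono v /\
      r1 ∘ v = t1 /\ r2 ∘ v = t2 /\ is_kernel t1 l /\ v ∘ l = k ∘ u.

Lemma kernel_restrictable_transfer (P Q : forall Y R : C, Hom R Y -> Hom R Y -> Prop)
    {S X : C} (u : Hom S X) :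
  (forall (Y R : C) (r1 r2 : Hom R Y), P Y R r1 r2 <-> Q Y R r1 r2) ->
  kernel_restrictable P u -> kernel_restrictable Q u.
Proof.
  intros HPQ HP Y R r1 r2 k HR Hk.
  destruct (HP Y R r1 r2 k (proj2 (HPQ _ _ _ _) HR) Hk) as [T [t1 [t2 [v [l [HT rest]]]]]].
  exists T, t1, t2, v, l. split; [apply HPQ, HT | exact rest].
Qed.

Lemma malcev_reflexive_equivalence (HM : malcev C) {Y R : C} (r1 r2 : Hom R Y) :
  is_reflexive_relation r1 r2 <-> is_equivalence_relation r1 r2.
Proof. split; [apply (proj2 HM) | apply proj1]. Qed.

End KernelRestriction.

Theorem proposition5p1 (C : Category) (Hpt : pointed C)
  (Hfc : finitely_complete C) (HM : malcev C)
  (S X : C) (u : Hom S X) :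
  let cond_a := is_characteristic_mono u in
  let cond_b := forall (A : C) (kappa : Hom X A),
      is_protosplit_mono kappa -> is_bourn_normal (kappa ∘ u) in
  let cond_c := forall (Y R : C) (r1 r2 : Hom R Y) (k : Hom X R),
      is_reflexive_relation r1 r2 -> is_kernel r1 k ->
      exists (T : C) (t1 t2 : Hom T Y) (v : Hom T R) (l : Hom S T),
        is_reflexive_relation t1 t2 /\ is_mono v /\
        r1 ∘ v = t1 /\ r2 ∘ v = t2 /\ is_kernel t1 l /\ v ∘ l = k ∘ u in
  let cond_d := forall (Y R : C) (r1 r2 : Hom R Y) (k : Hom X R),
      is_equivalence_relation r1 r2 -> is_kernel r1 k ->
      exists (T : C) (t1 t2 : Hom T Y) (v : Hom T R) (l : Hom S T),
        is_equivalence_relation t1 t2 /\ is_mono v /\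
        r1 ∘ v = t1 /\ r2 ∘ v = t2 /\ is_kernel t1 l /\ v ∘ l = k ∘ u in
  (cond_a <-> cond_b) /\ (cond_a <-> cond_c) /\ (cond_a <-> cond_d).
Proof.
  intros cond_a cond_b cond_c cond_d.
  destruct Hfc as [_ [Hprod [Heq Hpb]]].
  assert (Hab : cond_a -> cond_b).
  { intros Ha A kappa [B [p [_ Hk]]].
    exact (Ha A kappa (kernel_bourn_normal Hpt Hpb Hprod Hk)). }
  assert (Hbc : cond_b -> cond_c).
  { intros Hb Y R r1 r2 k HR Hk.
    apply (kernel_restriction_of_bourn_normal Hpt Heq u HR Hk), Hb.
    destruct HR as [_ [s [Hs1 _]]]. exists Y, r1. split; [exists s |]; assumption. }
  assert (Hcd : cond_c <-> cond_d).
  { split; apply kernel_restrictable_transfer; intros Y R r1 r2; [|apply iff_sym];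
      exact (malcev_reflexive_equivalence HM r1 r2). }
  assert (Hda : cond_d -> cond_a).
  { intros Hd Y n Hn.
    destruct (bourn_normal_equivalence_kernel Hpt Hn) as [R [r1 [r2 [k [HE [Hk <-]]]]]].
    destruct (Hd Y R r1 r2 k HE Hk) as [T [t1 [t2 [v [l [HT [_ [_ [<- [Hl Hvl]]]]]]]]]].
    rewrite <- comp_assoc, <- Hvl, comp_assoc.
    exact (equivalence_kernel_bourn_normal Hpb Hprod HT Hl). }
  tauto.
Qed.
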